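(* Let $\ell_n>0$, $\sigma_{n,0}>0$, $\sigma_{n,1}\ge0$, $\sigma_{n,-1}\ge0$, $\kappa_n\in\mathbb R$ for $n\in\mathbb N$, and assume $$\liminf_{n\to\infty}\sigma_{n,0}>0,\qquad \limsup_{n\to\infty}\sigma_{n,1}\sqrt{\ell_{n+1}/\ell_n}<\infty,\qquad \limsup_{n\to\infty}\sigma_{n,-1}\sqrt{\ell_{n-1}/\ell_n}<\infty,\qquad \limsup_{n\to\infty}\frac{|\kappa_n|}{\sqrt{\ell_n}}<\infty .$$ If a real sequence $(x_n)_{n\in\mathbb N}$ (with some $x_0\in\mathbb R$) satisfies $$\ell_n = x_n\big(\sigma_{n,1}x_{n+1}+\sigma_{n,0}x_n+\sigma_{n,-1}x_{n-1}\big)+\kappa_n x_n,\qquad n\in\mathbb N,$$ then $$\liminf_{n\to\infty}\frac{x_n}{\sqrt{\ell_n}}>-\infty\iff\limsup_{n\to\infty}\frac{x_n}{\sqrt{\ell_n}}<\infty .$$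
   Context: $\mathbb N=\{1,2,3,\dots\}$. The sequence $(x_n)$ need not be positive. *)

From Stdlib Require Import Reals.
Open Scope R_scope.

(* Extended-real liminf/limsup conditions, written out explicitly
   (Stdlib has no liminf/limsup in [-oo,+oo]).  *)

Definition liminf_pos (a : nat -> R) : Prop :=
  exists c, 0 < c /\ exists N, forall n, (N <= n)%nat -> c <= a n.

Definition limsup_finite (a : nat -> R) : Prop :=
  exists M, exists N, forall n, (N <= n)%nat -> a n <= M.

Definition liminf_finite (a : nat -> R) : Prop :=
  exists m, exists N, forall n, (N <= n)%nat -> m <= a n.

From Stdlib Require Import Reals Lra Lia.
Open Scope R_scope.

(* Put y_n = x_n / sqrt(l_n).  Dividing the recurrence by l_n
   turns it into the normalized recurrence
     1 = y_n (a_n y_{n+1} + s0_n y_n + b_n y_{n-1}) + kappa_n y_n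
   with a_n = s1_n sqrt(l_{n+1}/l_n), b_n = sm1_n sqrt(l_{n-1}/l_n) and
   kappa_n = k_n / sqrt(l_n); the hypotheses say that a_n, b_n, |kappa_n| are
   eventually bounded and s0_n is eventually bounded away from 0.
   If y is eventually bounded below by -m, then at any index where y_n > 1
   the recurrence gives c0 y_n^2 <= 1 + ((A+B) m + K) y_n, hence y_n is
   bounded above: this is [quadratic_upper_bound], pointwise, and
   [normalized_bounded_above], eventually.  [normalized_recurrence] performs
   the division by l_n, giving the direction "liminf > -oo => limsup < +oo".
   The converse follows by symmetry: (x, k) -> (-x, -k) preserves the
   recurrence and all hypotheses while exchanging the two conditions. *)

Lemma quadratic_upper_bound (c0 A B K m s0 a b kk y y1 y2 : R) :
  0 < c0 -> c0 <= s0 -> 0 <= a <= A -> 0 <= b <= B -> Rabs kk <= K ->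
  0 <= m -> -m <= y1 -> -m <= y2 ->
  1 = y * (a * y1 + s0 * y + b * y2) + kk * y ->
  y <= Rmax 1 ((1 + (A + B) * m + K) / c0).
Proof.
  intros Hc0 Hs0 [Ha HaA] [Hb HbB] Hk Hm Hy1 Hy2 Hrec.
  destruct (Rle_dec y 1) as [Hy | Hy]; [apply Rle_trans with 1; [lra | apply Rmax_l] |].
  apply Rle_trans with ((1 + (A + B) * m + K) / c0); [| apply Rmax_r].
  assert (Hkk : - K <= kk) by (pose proof (Rle_abs (- kk)); rewrite Rabs_Ropp in *; lra).
  assert (Hneigh : a * y1 + b * y2 >= - ((A + B) * m)) by nra.
  (* c0 y^2 <= s0 y^2 = 1 - y (a y1 + b y2) - kk y <= 1 + ((A+B) m + K) y *)
  assert (Hquad : c0 * y * y <= 1 + ((A + B) * m + K) * y) by nra.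
  apply Rmult_le_reg_l with c0; [lra |].
  replace (c0 * ((1 + (A + B) * m + K) / c0)) with (1 + (A + B) * m + K) by (field; lra).
  nra.
Qed.

(* The recurrence is only assumed from n = 2 on,
   since normalizing at n = 1 would involve l_0, which need not be positive. *)
Lemma normalized_bounded_above (s0 a b kk y : nat -> R) :
  liminf_pos s0 ->
  (forall n, (1 <= n)%nat -> 0 <= a n) -> limsup_finite a ->
  (forall n, (1 <= n)%nat -> 0 <= b n) -> limsup_finite b ->
  limsup_finite (fun n => Rabs (kk n)) ->
  (forall n, (2 <= n)%nat ->
     1 = y n * (a n * y (S n) + s0 n * y n + b n * y (pred n)) + kk n * y n) ->
  liminf_finite y -> limsup_finite y.
Proof.
  intros [c0 [Hc0 [N0 Hs0]]] Ha [A [N1 HA]] Hb [B [N2 HB]] [K [N3 HK]] Hrec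
    [m0 [N4 Hy]].
  exists (Rmax 1 ((1 + (A + B) * Rabs m0 + K) / c0)), (S (S (N0 + N1 + N2 + N3 + N4))).
  intros n Hn.
  assert (Hlow : forall j, (N4 <= j)%nat -> - Rabs m0 <= y j)
    by (intros j Hj; specialize (Hy j Hj); pose proof (Rle_abs (- m0));
        rewrite Rabs_Ropp in *; lra).
  apply quadratic_upper_bound with (s0 := s0 n) (a := a n) (b := b n) (kk := kk n)
    (y1 := y (S n)) (y2 := y (pred n)).
  - exact Hc0.
  - apply Hs0; lia.
  - split; [apply Ha | apply HA]; lia.
  - split; [apply Hb | apply HB]; lia.
  - apply HK; lia.
  - apply Rabs_pos.
  - apply Hlow; lia.
  - apply Hlow; lia.
  - apply Hrec; lia.
Qed.

Lemma normalized_recurrence (l0 l1 l2 s0 s1 sm1 k x0 x1 x2 : R) :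
  0 < l0 -> 0 < l1 -> 0 < l2 ->
  l0 = x0 * (s1 * x1 + s0 * x0 + sm1 * x2) + k * x0 ->
  1 = x0 / sqrt l0 * (s1 * sqrt (l1 / l0) * (x1 / sqrt l1) + s0 * (x0 / sqrt l0)
                      + sm1 * sqrt (l2 / l0) * (x2 / sqrt l2))
      + k / sqrt l0 * (x0 / sqrt l0).
Proof.
  intros H0 H1 H2 Hrec.
  pose proof (sqrt_lt_R0 _ H0). pose proof (sqrt_lt_R0 _ H1).
  pose proof (sqrt_lt_R0 _ H2).
  assert (Hsq : sqrt l0 * sqrt l0 = l0) by (apply sqrt_sqrt; lra).
  rewrite !sqrt_div_alt by exact H0.
  apply Rmult_eq_reg_l with (sqrt l0 * sqrt l0); [| nra].
  rewrite Rmult_1_r, Hsq at 1. rewrite Hrec at 1. field. lra.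
Qed.

Lemma limsup_finite_of_liminf_finite (l s0 s1 sm1 k x : nat -> R) :
  (forall n, (1 <= n)%nat -> 0 < l n) ->
  (forall n, (1 <= n)%nat -> 0 <= s1 n) ->
  (forall n, (1 <= n)%nat -> 0 <= sm1 n) ->
  liminf_pos s0 ->
  limsup_finite (fun n => s1 n * sqrt (l (S n) / l n)) ->
  limsup_finite (fun n => sm1 n * sqrt (l (pred n) / l n)) ->
  limsup_finite (fun n => Rabs (k n) / sqrt (l n)) ->
  (forall n, (1 <= n)%nat ->
     l n = x n * (s1 n * x (S n) + s0 n * x n + sm1 n * x (pred n)) + k n * x n) ->
  liminf_finite (fun n => x n / sqrt (l n)) ->
  limsup_finite (fun n => x n / sqrt (l n)).
Proof.
  intros hl hs1 hsm1 A0 A1 A2 [K [N HK]] hrec.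
  apply (normalized_bounded_above s0 (fun n => s1 n * sqrt (l (S n) / l n))
    (fun n => sm1 n * sqrt (l (pred n) / l n)) (fun n => k n / sqrt (l n))); trivial.
  - intros n Hn. apply Rmult_le_pos; [apply hs1, Hn | apply sqrt_pos].
  - intros n Hn. apply Rmult_le_pos; [apply hsm1, Hn | apply sqrt_pos].
  - exists K, N. intros n Hn. unfold Rdiv.
    rewrite Rabs_mult, Rabs_inv, (Rabs_pos_eq (sqrt (l n))) by apply sqrt_pos.
    apply HK, Hn.
  - intros n Hn. apply normalized_recurrence; [apply hl; lia .. | apply hrec; lia].
Qed.

Lemma liminf_finite_opp (f g : nat -> R) :
  (forall n, g n = - f n) -> limsup_finite f -> liminf_finite g.
Proof.
  intros Hg [M [N HM]]. exists (- M), N. intros n Hn. rewrite Hg. specialize (HM n Hn). lra.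
Qed.

Lemma limsup_finite_opp (f g : nat -> R) :
  (forall n, g n = - f n) -> liminf_finite f -> limsup_finite g.
Proof.
  intros Hg [m [N Hm]]. exists (- m), N. intros n Hn. rewrite Hg. specialize (Hm n Hn). lra.
Qed.

Theorem theorem6p1
  (l s0 s1 sm1 k x : nat -> R)
  (hl : forall n, (1 <= n)%nat -> 0 < l n)
  (hs0 : forall n, (1 <= n)%nat -> 0 < s0 n)
  (hs1 : forall n, (1 <= n)%nat -> 0 <= s1 n)
  (hsm1 : forall n, (1 <= n)%nat -> 0 <= sm1 n)
  (A0 : liminf_pos s0)
  (A1 : limsup_finite (fun n => s1 n * sqrt (l (S n) / l n)))
  (A2 : limsup_finite (fun n => sm1 n * sqrt (l (pred n) / l n)))
  (A3 : limsup_finite (fun n => Rabs (k n) / sqrt (l n)))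
  (hrec : forall n, (1 <= n)%nat ->
     l n = x n * (s1 n * x (S n) + s0 n * x n + sm1 n * x (pred n)) + k n * x n) :
  liminf_finite (fun n => x n / sqrt (l n)) <->
  limsup_finite (fun n => x n / sqrt (l n)).
Proof.
  split; [now apply (limsup_finite_of_liminf_finite l s0 s1 sm1 k) |].
  intros Hsup.
  (* The pair (-x, -k) satisfies the same recurrence and hypotheses. *)
  assert (A3' : limsup_finite (fun n => Rabs (- k n) / sqrt (l n))).
  { destruct A3 as [K [N HK]]. exists K, N. intros n Hn. rewrite Rabs_Ropp. apply HK, Hn. }
  assert (hrec' : forall n, (1 <= n)%nat ->
     l n = - x n * (s1 n * - x (S n) + s0 n * - x n + sm1 n * - x (pred n)) + - k n * - x n)
    by (intros n Hn; rewrite (hrec n Hn); ring).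
  apply (liminf_finite_opp (fun n => - x n / sqrt (l n)));
    [intros n; unfold Rdiv; ring |].
  apply (limsup_finite_of_liminf_finite l s0 s1 sm1 (fun n => - k n)); trivial.
  apply (liminf_finite_opp (fun n => x n / sqrt (l n))); [intros n; unfold Rdiv; ring | exact Hsup].
Qed.
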